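(* Let $s_*\in\mathbb{R}$ and let $\gamma,\delta:[s_*,\infty)\to\mathbb{R}$ be functions with $|\gamma(s)|+|\delta(s)|\le\frac{C}{s^{10}}$ for some constant $C$. Let $\phi:[s_*,\infty)\to\mathbb{R}$ be a $C^1$ solution of $\phi'=(1+\phi^2)\Big(1+\gamma(s)-\big(\tfrac1s+\delta(s)\big)\phi\Big)$. Then $\phi(s)=s-\frac1s+O(s^{-2})$ as $s\to\infty$. *)

From Stdlib Require Export Reals.
Open Scope R_scope.

Definition ode_rhs (gamma delta : R -> R) (s y : R) : R :=
  (1 + y ^ 2) * (1 + gamma s - (1 / s + delta s) * y).

From Stdlib Require Import Reals Lra Psatz Classical.
Open Scope R_scope.

(* The angle atan phi is bounded and its derivative is the second factor of
   ode_rhs, which is >= 1/4 while phi <= s/2 and <= -1/2 while phi >= 2s.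
   Hence phi enters the strip s/2 < phi < 2s, and never leaves it because it
   crosses both boundary lines in the inward direction.  Inside the strip the
   defect D = s^2 (phi - (s - 1/s)) satisfies D' <= -1 whenever D >= 1 and
   D' >= 1 whenever D <= -1, so eventually |D| < 1. *)

Lemma continuity_pt_eps (h : R -> R) x eps : continuity_pt h x -> 0 < eps ->
  exists del, 0 < del /\ forall y, Rabs (y - x) < del -> Rabs (h y - h x) < eps.
Proof.
  intros Hc Heps.
  destruct (Hc eps Heps) as [del [Hdel Hnear]].
  exists del; split; [exact Hdel|]; intros y Hy.
  destruct (Req_dec y x) as [->|Hyx].
  - rewrite Rminus_diag, Rabs_R0; exact Heps.
  - apply Hnear; repeat split; auto.
Qed.

Lemma first_root (h : R -> R) a b : a < b ->
  (forall u, a <= u <= b -> continuity_pt h u) -> h a < 0 -> 0 <= h b ->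
  exists z, a < z <= b /\ h z = 0 /\ forall u, a <= u < z -> h u < 0.
Proof.
  intros Hab Hc Ha Hb.
  set (E := fun x => a <= x <= b /\ forall u, a <= u <= x -> h u < 0).
  assert (HaE : E a) by (split; [lra|]; intros u Hu; replace u with a by lra; exact Ha).
  destruct (completeness E) as [m [Hub Hlub]].
  { exists b; intros x [Hx _]; lra. }
  { exists a; exact HaE. }
  assert (Ham : a <= m) by (apply Hub, HaE).
  assert (Hmb : m <= b) by (apply Hlub; intros x [Hx _]; lra).
  assert (Hbefore : forall u, a <= u < m -> h u < 0).
  { intros u Hu; destruct (Rlt_le_dec (h u) 0) as [Hneg|Hnonneg]; [exact Hneg|].
    assert (m <= u); [|lra].
    apply Hlub; intros x [_ Hx]; apply Rnot_lt_le; intro Hux.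
    specialize (Hx u ltac:(lra)); lra. }
  destruct (Rtotal_order (h m) 0) as [Hneg|[Hzero|Hpos]].
  - exfalso.
    assert (Hmb' : m < b) by (destruct (Req_dec m b) as [->|]; lra).
    destruct (continuity_pt_eps h m (- h m) (Hc m ltac:(lra)) ltac:(lra))
      as [del [Hdel Hnear]].
    set (x := Rmin (m + del / 2) b).
    assert (Hmx : m < x) by (apply Rmin_glb_lt; lra).
    assert (Hx : x <= m + del / 2) by apply Rmin_l.
    enough (HEx : E x) by (specialize (Hub x HEx); lra).
    split; [split; [lra|apply Rmin_r]|].
    intros u Hu; destruct (Rlt_le_dec u m) as [Hum|Hmu]; [apply Hbefore; lra|].
    assert (Hd : Rabs (h u - h m) < - h m) by (apply Hnear; rewrite Rabs_right; lra).
    apply Rabs_def2 in Hd; lra.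
  - exists m; split; [|split; [exact Hzero|exact Hbefore]].
    split; [destruct (Req_dec a m) as [<-|]; lra|exact Hmb].
  - exfalso.
    assert (Ham' : a < m) by (destruct (Req_dec a m) as [<-|]; lra).
    destruct (continuity_pt_eps h m (h m) (Hc m ltac:(lra)) Hpos) as [del [Hdel Hnear]].
    set (u := Rmax a (m - del / 2)).
    assert (Hum : u < m) by (apply Rmax_lub_lt; lra).
    assert (Hu : m - del / 2 <= u) by apply Rmax_r.
    assert (Hd : Rabs (h u - h m) < h m) by (apply Hnear; rewrite Rabs_left; lra).
    apply Rabs_def2 in Hd.
    specialize (Hbefore u (conj (Rmax_l _ _) Hum)); lra.
Qed.

Lemma derivable_pt_lim_nonneg_at_left_max (h : R -> R) a z l : a < z ->
  (forall u, a <= u < z -> h u <= h z) -> derivable_pt_lim h z l -> 0 <= l.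
Proof.
  intros Haz Hmax Hd.
  destruct (Rle_lt_dec 0 l) as [Hl|Hl]; [exact Hl|exfalso].
  destruct (Hd (- l / 2) ltac:(lra)) as [del Hdel].
  pose proof (cond_pos del) as Hdel0.
  set (k := - Rmin (del / 2) ((z - a) / 2)).
  assert (Hk1 : - (del / 2) <= k) by (apply Ropp_le_contravar, Rmin_l).
  assert (Hk2 : - ((z - a) / 2) <= k) by (apply Ropp_le_contravar, Rmin_r).
  assert (Hk : k < 0) by (apply Ropp_lt_gt_0_contravar, Rmin_glb_lt; lra).
  specialize (Hdel k ltac:(lra) ltac:(rewrite Rabs_left; lra)).
  apply Rabs_def2 in Hdel.
  assert (Hinv : / k < 0) by (apply Rinv_lt_0_compat; exact Hk).
  assert (Hle : h (z + k) - h z <= 0) by (specialize (Hmax (z + k) ltac:(lra)); lra).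
  assert (0 <= (h (z + k) - h z) / k) by (unfold Rdiv; nra).
  lra.
Qed.

Lemma negative_forever (h h' : R -> R) a :
  (forall u, a <= u -> derivable_pt_lim h u (h' u)) -> h a < 0 ->
  (forall u, a <= u -> h u = 0 -> h' u < 0) -> forall s, a <= s -> h s < 0.
Proof.
  intros Hd Ha Hzero s Hs.
  destruct (Rlt_le_dec (h s) 0) as [Hneg|Hnonneg]; [exact Hneg|exfalso].
  assert (Has : a < s) by (destruct (Req_dec a s) as [<-|]; lra).
  destruct (first_root h a s Has) as [z [Hz [Hhz Hbefore]]]; auto.
  { intros u Hu; apply derivable_continuous_pt; exists (h' u); apply Hd; lra. }
  assert (0 <= h' z).
  { apply (derivable_pt_lim_nonneg_at_left_max h a z); [lra| |apply Hd; lra].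
    intros u Hu; rewrite Hhz; apply Rlt_le, Hbefore, Hu. }
  specialize (Hzero z ltac:(lra) Hhz); lra.
Qed.

Lemma eventually_below (h h' : R -> R) a k c : 0 < c ->
  (forall u, a <= u -> derivable_pt_lim h u (h' u)) ->
  (forall u, a <= u -> k <= h u -> h' u <= - c) -> exists M, forall s, M <= s -> h s < k.
Proof.
  intros Hc Hd Hdecr.
  destruct (classic (exists b, a <= b /\ h b < k)) as [[b [Hab Hb]]|Hnone].
  - exists b; intros s Hs.
    enough (h s - k < 0) by lra.
    apply (negative_forever (fun t => h t - k) h' b); [|lra| |exact Hs].
    + intros u Hu; replace (h' u) with (h' u - 0) by ring.
      apply derivable_pt_lim_minus; [apply Hd; lra|apply derivable_pt_lim_const].
    + intros u Hu Hu0; specialize (Hdecr u ltac:(lra) ltac:(lra)); lra.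
  - exfalso.
    assert (Habove : forall u, a <= u -> k <= h u).
    { intros u Hu; apply Rnot_lt_le; intro Hlt; apply Hnone; exists u; auto. }
    set (L := (Rabs (h a - k) + 1) / c).
    assert (HL : 0 < L) by (apply Rdiv_lt_0_compat; [pose proof (Rabs_pos (h a - k))|]; lra).
    assert (HcL : c * L = Rabs (h a - k) + 1) by (unfold L; field; lra).
    destruct (MVT_cor2 h h' a (a + L)) as [x [Hmvt Hx]]; [lra|intros; apply Hd; lra|].
    specialize (Hdecr x ltac:(lra) (Habove x ltac:(lra))).
    specialize (Habove (a + L) ltac:(lra)).
    pose proof (Rle_abs (h a - k)).
    replace (a + L - a) with L in Hmvt by ring.
    nra.
Qed.

Lemma bounded_reaches (P : R -> Prop) (th th' : R -> R) a B c : 0 < c ->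
  (forall u, a <= u -> derivable_pt_lim th u (th' u)) ->
  (forall u, a <= u -> Rabs (th u) <= B) ->
  (forall u, a <= u -> ~ P u -> c <= th' u) -> exists b, a <= b /\ P b.
Proof.
  intros Hc Hd HB Hincr.
  apply NNPP; intro Hnone.
  assert (Hrate : forall u, a <= u -> c <= th' u).
  { intros u Hu; apply Hincr; [exact Hu|]; intro HP; apply Hnone; exists u; auto. }
  set (L := (2 * B + 1) / c).
  assert (HB0 : 0 <= B) by (specialize (HB a (Rle_refl a)); pose proof (Rabs_pos (th a)); lra).
  assert (HL : 0 < L) by (apply Rdiv_lt_0_compat; lra).
  assert (HcL : c * L = 2 * B + 1) by (unfold L; field; lra).
  destruct (MVT_cor2 th th' a (a + L)) as [x [Hmvt Hx]]; [lra|intros; apply Hd; lra|].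
  specialize (Hrate x ltac:(lra)).
  pose proof (HB a (Rle_refl a)) as Ha; pose proof (HB (a + L) ltac:(lra)) as HaL.
  pose proof (Rle_abs (th (a + L))); pose proof (Rle_abs (- th a)).
  rewrite Rabs_Ropp in *.
  replace (a + L - a) with L in Hmvt by ring.
  nra.
Qed.

Lemma derivable_pt_lim_atan_comp (f : R -> R) x l : derivable_pt_lim f x l ->
  derivable_pt_lim (fun t => atan (f t)) x (l / (1 + f x ^ 2)).
Proof.
  intros Hf.
  pose proof (derivable_pt_lim_comp f atan x _ _ Hf (derivable_pt_lim_atan (f x))) as H.
  replace (l / (1 + f x ^ 2)) with (/ (1 + f x ^ 2) * l) by (unfold Rdiv; ring).
  exact H.
Qed.

Lemma derivable_pt_lim_linear_sub (f : R -> R) x l c : derivable_pt_lim f x l ->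
  derivable_pt_lim (fun t => c * t - f t) x (c - l).
Proof.
  intros Hf.
  pose proof (derivable_pt_lim_minus _ _ x _ _
    (derivable_pt_lim_scal id c x 1 (derivable_pt_lim_id x)) Hf) as H.
  replace (c - l) with (c * 1 - l) by ring; exact H.
Qed.

Lemma derivable_pt_lim_sub_linear (f : R -> R) x l c : derivable_pt_lim f x l ->
  derivable_pt_lim (fun t => f t - c * t) x (l - c).
Proof.
  intros Hf.
  pose proof (derivable_pt_lim_minus _ _ x _ _ Hf
    (derivable_pt_lim_scal id c x 1 (derivable_pt_lim_id x))) as H.
  replace (l - c) with (l - c * 1) by ring; exact H.
Qed.

Definition ode_slope (s g d y : R) : R := 1 + g - (1 / s + d) * y.
Definition asymptote_defect (s y : R) : R := y * s ^ 2 - s ^ 3 + s.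
Definition asymptote_defect_rate (s y dy : R) : R :=
  dy * s ^ 2 + 2 * s * y - 3 * s ^ 2 + 1.

Lemma ode_rhs_slope gamma delta s y :
  ode_rhs gamma delta s y = (1 + y ^ 2) * ode_slope s (gamma s) (delta s) y.
Proof. reflexivity. Qed.

Lemma derivable_pt_lim_asymptote_defect (f : R -> R) x l : derivable_pt_lim f x l ->
  derivable_pt_lim (fun t => asymptote_defect t (f t)) x (asymptote_defect_rate x (f x) l).
Proof.
  intros Hf.
  pose proof (derivable_pt_lim_plus _ _ x _ _
    (derivable_pt_lim_minus _ _ x _ _
      (derivable_pt_lim_mult f (fun t => t ^ 2) x _ _ Hf (derivable_pt_lim_pow x 2))
      (derivable_pt_lim_pow x 3))
    (derivable_pt_lim_id x)) as H.
  unfold asymptote_defect_rate; replace (l * x ^ 2 + 2 * x * f x - 3 * x ^ 2 + 1) with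
    (l * x ^ 2 + f x * (INR 2 * x ^ Init.Nat.pred 2) - INR 3 * x ^ Init.Nat.pred 3 + 1)
    by (simpl; ring).
  exact H.
Qed.

Section Estimates.
Variables s g d : R.
Let e := Rabs g + Rabs d.
Hypothesis Hs : 1000 <= s.
Hypothesis He : e * s ^ 5 <= 1 / 1000.

Let g_bounds : - e <= g <= e.
Proof.
  pose proof (Rle_abs g); pose proof (Rle_abs (- g)); pose proof (Rabs_pos d).
  rewrite Rabs_Ropp in *; unfold e; lra.
Qed.

Let d_bounds : - e <= d <= e.
Proof.
  pose proof (Rle_abs d); pose proof (Rle_abs (- d)); pose proof (Rabs_pos g).
  rewrite Rabs_Ropp in *; unfold e; lra.
Qed.

Let e_mul_s_small : e * s <= 1 / 1000.
Proof.
  assert (1 <= s ^ 4) by (rewrite <- (pow1 4); apply pow_incr; lra).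
  pose proof g_bounds; replace (s ^ 5) with (s * s ^ 4) in He by ring; nra.
Qed.

Let inv_s_pos : 0 < 1 / s.
Proof. apply Rdiv_lt_0_compat; lra. Qed.

Let s_mul_inv : s * (1 / s) = 1.
Proof. field; lra. Qed.

Lemma ode_slope_ge_quarter p : p <= s / 2 -> 1 / 4 <= ode_slope s g d p.
Proof.
  intros Hp; unfold ode_slope.
  destruct (Rle_lt_dec p 0) as [Hneg|Hpos]; [|nra].
  assert (0 <= 1 / s + d) by nra.
  nra.
Qed.

Lemma ode_slope_le_neg_half p : 2 * s <= p -> ode_slope s g d p <= - 1 / 2.
Proof.
  intros Hp; unfold ode_slope.
  assert (Hdom : 0 <= 1 / s - e) by nra.
  assert (2 - 2 * e * s <= (1 / s + d) * p) by nra.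
  nra.
Qed.

Lemma ode_rhs_gt_half_on_lower_barrier :
  1 / 2 < (1 + (s / 2) ^ 2) * ode_slope s g d (s / 2).
Proof. pose proof (ode_slope_ge_quarter (s / 2) (Rle_refl _)); nra. Qed.

Lemma ode_rhs_lt_two_on_upper_barrier :
  (1 + (2 * s) ^ 2) * ode_slope s g d (2 * s) < 2.
Proof. pose proof (ode_slope_le_neg_half (2 * s) (Rle_refl _)); nra. Qed.

Lemma perturbation_term_small p : s / 2 < p < 2 * s ->
  Rabs (s ^ 2 * ((1 + p ^ 2) * (g - d * p))) <= 15 / 1000.
Proof.
  intros Hp.
  assert (Hgdp : Rabs (g - d * p) <= e * (1 + 2 * s)).
  { apply Rabs_le; split; nra. }
  rewrite !Rabs_mult, (Rabs_right (s ^ 2)), (Rabs_right (1 + p ^ 2)) by nra.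
  assert (Hp2 : 1 + p ^ 2 <= 5 * s ^ 2) by nra.
  pose proof (Rabs_pos (g - d * p)).
  assert (s ^ 2 * ((1 + p ^ 2) * Rabs (g - d * p))
          <= s ^ 2 * (5 * s ^ 2 * (e * (1 + 2 * s)))).
  { apply Rmult_le_compat_l; [nra|]; apply Rmult_le_compat; nra. }
  assert (e * s ^ 4 <= 1 / 1000).
  { replace (s ^ 5) with (s ^ 4 * s) in He by ring. nra. }
  nra.
Qed.

(* The first term has the sign of - asymptote_defect and, in the strip
   s/2 < p < 2s, size at least s/8 as soon as |asymptote_defect| >= 1; the
   other two terms are bounded by 3 and 15/1000. *)
Lemma asymptote_defect_rate_decomposition p :
  asymptote_defect_rate s p ((1 + p ^ 2) * ode_slope s g d p) =
  - (asymptote_defect s p * (1 / s) ^ 2) * ((1 + p ^ 2) * s - p - 3 * s)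
  - (p + s) * (1 / s) + s ^ 2 * ((1 + p ^ 2) * (g - d * p)).
Proof. unfold asymptote_defect_rate, asymptote_defect, ode_slope; field; lra. Qed.

Lemma asymptote_defect_rate_le_neg_one p :
  s / 2 < p < 2 * s -> 1 <= asymptote_defect s p ->
  asymptote_defect_rate s p ((1 + p ^ 2) * ode_slope s g d p) <= -1.
Proof.
  intros Hp Hdef; rewrite asymptote_defect_rate_decomposition.
  pose proof (perturbation_term_small p Hp) as Hpert.
  pose proof (Rle_abs (s ^ 2 * ((1 + p ^ 2) * (g - d * p)))).
  assert (HA : s ^ 3 / 8 <= (1 + p ^ 2) * s - p - 3 * s) by nra.
  assert (Hw : (1 / s) ^ 2 <= asymptote_defect s p * (1 / s) ^ 2) by nra.
  assert (s / 8 <= asymptote_defect s p * (1 / s) ^ 2 * ((1 + p ^ 2) * s - p - 3 * s)).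
  { apply Rle_trans with ((1 / s) ^ 2 * (s ^ 3 / 8)).
    - right; field; lra.
    - apply Rmult_le_compat; nra. }
  nra.
Qed.

Lemma asymptote_defect_rate_ge_one p :
  s / 2 < p < 2 * s -> asymptote_defect s p <= -1 ->
  1 <= asymptote_defect_rate s p ((1 + p ^ 2) * ode_slope s g d p).
Proof.
  intros Hp Hdef; rewrite asymptote_defect_rate_decomposition.
  pose proof (perturbation_term_small p Hp) as Hpert.
  pose proof (Rle_abs (- (s ^ 2 * ((1 + p ^ 2) * (g - d * p))))); rewrite Rabs_Ropp in *.
  assert (HA : s ^ 3 / 8 <= (1 + p ^ 2) * s - p - 3 * s) by nra.
  assert (Hw : (1 / s) ^ 2 <= - (asymptote_defect s p * (1 / s) ^ 2)) by nra.
  assert (s / 8 <= - (asymptote_defect s p * (1 / s) ^ 2) * ((1 + p ^ 2) * s - p - 3 * s)).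
  { apply Rle_trans with ((1 / s) ^ 2 * (s ^ 3 / 8)).
    - right; field; lra.
    - apply Rmult_le_compat; nra. }
  assert ((p + s) * (1 / s) <= 3) by nra.
  nra.
Qed.

End Estimates.

Section Solution.
Variables (gamma delta phi : R -> R) (a : R).
Hypothesis Ha : 1000 <= a.
Hypothesis Hsmall :
  forall u, a <= u -> (Rabs (gamma u) + Rabs (delta u)) * u ^ 5 <= 1 / 1000.
Hypothesis Hphi :
  forall u, a <= u -> derivable_pt_lim phi u (ode_rhs gamma delta u (phi u)).

Lemma derivable_pt_lim_atan_solution u : a <= u ->
  derivable_pt_lim (fun t => atan (phi t)) u (ode_slope u (gamma u) (delta u) (phi u)).
Proof.
  intros Hu.
  replace (ode_slope u (gamma u) (delta u) (phi u))
    with (ode_rhs gamma delta u (phi u) / (1 + phi u ^ 2))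
    by (rewrite ode_rhs_slope; field; nra).
  apply derivable_pt_lim_atan_comp, Hphi, Hu.
Qed.

Lemma solution_eventually_above_lower_barrier :
  exists b, a <= b /\ forall u, b <= u -> u / 2 < phi u.
Proof.
  destruct (bounded_reaches (fun u => u / 2 < phi u) (fun t => atan (phi t))
    (fun u => ode_slope u (gamma u) (delta u) (phi u)) a 2 (1 / 4)) as [b [Hab Hb]].
  - lra.
  - exact derivable_pt_lim_atan_solution.
  - intros u _; pose proof (atan_bound (phi u)); pose proof PI_4.
    apply Rabs_le; lra.
  - intros u Hu Hbelow; apply ode_slope_ge_quarter; [lra|apply Hsmall; lra|lra].
  - exists b; split; [exact Hab|]; intros u Hu.
    enough (1 / 2 * u - phi u < 0) by lra.
    apply (negative_forever (fun t => 1 / 2 * t - phi t)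
      (fun t => 1 / 2 - ode_rhs gamma delta t (phi t)) b); [|cbv beta; lra| |exact Hu].
    + intros v Hv; apply derivable_pt_lim_linear_sub, Hphi; lra.
    + intros v Hv Hcross.
      replace (phi v) with (v / 2) by lra; rewrite ode_rhs_slope.
      pose proof (ode_rhs_gt_half_on_lower_barrier v (gamma v) (delta v)
        ltac:(lra) (Hsmall v ltac:(lra))); lra.
Qed.

Lemma solution_eventually_between_barriers :
  exists b, a <= b /\ forall u, b <= u -> u / 2 < phi u < 2 * u.
Proof.
  destruct solution_eventually_above_lower_barrier as [b1 [Hab1 Habove]].
  destruct (bounded_reaches (fun u => phi u < 2 * u) (fun t => - atan (phi t))
    (fun u => - ode_slope u (gamma u) (delta u) (phi u)) b1 2 (1 / 2)) as [b [Hb1b Hb]].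
  - lra.
  - intros u Hu; apply derivable_pt_lim_opp, derivable_pt_lim_atan_solution; lra.
  - intros u _; pose proof (atan_bound (phi u)); pose proof PI_4.
    rewrite Rabs_Ropp; apply Rabs_le; lra.
  - intros u Hu Hnot_below.
    pose proof (ode_slope_le_neg_half u (gamma u) (delta u)
      ltac:(lra) (Hsmall u ltac:(lra)) (phi u) ltac:(lra)); lra.
  - exists b; split; [lra|]; intros u Hu; split; [apply Habove; lra|].
    enough (phi u - 2 * u < 0) by lra.
    apply (negative_forever (fun t => phi t - 2 * t)
      (fun t => ode_rhs gamma delta t (phi t) - 2) b); [|cbv beta; lra| |exact Hu].
    + intros v Hv; apply derivable_pt_lim_sub_linear, Hphi; lra.
    + intros v Hv Hcross.
      replace (phi v) with (2 * v) by lra; rewrite ode_rhs_slope.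
      pose proof (ode_rhs_lt_two_on_upper_barrier v (gamma v) (delta v)
        ltac:(lra) (Hsmall v ltac:(lra))); lra.
Qed.

Lemma solution_asymptote_defect_eventually_small :
  exists M, forall u, M <= u -> Rabs (asymptote_defect u (phi u)) < 1.
Proof.
  destruct solution_eventually_between_barriers as [b [Hab Hbetween]].
  assert (Hrate : forall u, b <= u ->
    derivable_pt_lim (fun t => asymptote_defect t (phi t)) u
      (asymptote_defect_rate u (phi u) (ode_rhs gamma delta u (phi u)))).
  { intros u Hu; apply derivable_pt_lim_asymptote_defect, Hphi; lra. }
  destruct (eventually_below (fun t => asymptote_defect t (phi t))
    (fun u => asymptote_defect_rate u (phi u) (ode_rhs gamma delta u (phi u))) b 1 1)
    as [M1 HM1]; [lra|exact Hrate| |].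
  { intros u Hu Hdef; rewrite ode_rhs_slope.
    apply asymptote_defect_rate_le_neg_one;
      [lra|apply Hsmall; lra|apply Hbetween; lra|exact Hdef]. }
  destruct (eventually_below (fun t => - asymptote_defect t (phi t))
    (fun u => - asymptote_defect_rate u (phi u) (ode_rhs gamma delta u (phi u))) b 1 1)
    as [M2 HM2]; [lra|intros u Hu; apply derivable_pt_lim_opp, Hrate, Hu| |].
  { intros u Hu Hdef; rewrite ode_rhs_slope; apply Ropp_le_contravar.
    apply asymptote_defect_rate_ge_one;
      [lra|apply Hsmall; lra|apply Hbetween; lra|lra]. }
  exists (Rmax M1 M2); intros u Hu.
  specialize (HM1 u (Rle_trans _ _ _ (Rmax_l M1 M2) Hu)).
  specialize (HM2 u (Rle_trans _ _ _ (Rmax_r M1 M2) Hu)).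
  apply Rabs_def1; lra.
Qed.

End Solution.

Lemma mul_pow5_le_of_le_div_pow10 x C s : 1000 <= s -> Rabs C <= s ->
  x <= C / s ^ 10 -> x * s ^ 5 <= 1 / 1000.
Proof.
  intros Hs HC Hx.
  assert (Hs5 : 0 < s ^ 5) by (apply pow_lt; lra).
  assert (Hprod : x * s ^ 5 * s ^ 5 <= s).
  { pose proof (Rle_abs C).
    apply Rmult_le_compat_r with (r := s ^ 10) in Hx; [|apply pow_le; lra].
    replace (C / s ^ 10 * s ^ 10) with C in Hx by (field; lra).
    replace (x * s ^ 5 * s ^ 5) with (x * s ^ 10) by ring; lra. }
  assert (Hs2 : 1000 <= s * s) by nra.
  assert (Hs4 : 1000 <= s ^ 4) by (replace (s ^ 4) with (s * s * (s * s)) by ring; nra).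
  assert (1000 * s <= s ^ 5) by (replace (s ^ 5) with (s * s ^ 4) by ring; nra).
  nra.
Qed.

Lemma Rabs_sub_asymptote s y : 0 < s ->
  Rabs (y - (s - 1 / s)) = Rabs (asymptote_defect s y) / s ^ 2.
Proof.
  intros Hs.
  replace (y - (s - 1 / s)) with (asymptote_defect s y * / s ^ 2)
    by (unfold asymptote_defect; field; lra).
  rewrite Rabs_mult, Rabs_inv, (Rabs_right (s ^ 2)) by (apply Rle_ge, pow_le; lra).
  reflexivity.
Qed.

Theorem lemma2p6 (sstar C : R) (gamma delta phi : R -> R)
  (Hsstar : 0 < sstar)
  (Hbound : forall s, sstar <= s -> Rabs (gamma s) + Rabs (delta s) <= C / s ^ 10)
  (Hderiv : forall s, sstar < s ->
      derivable_pt_lim phi s (ode_rhs gamma delta s (phi s)))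
  (HC1 : forall s, sstar < s ->
      continuity_pt (fun t => ode_rhs gamma delta t (phi t)) s) :
  exists K M : R, forall s, M <= s ->
    Rabs (phi s - (s - 1 / s)) <= K / s ^ 2.
Proof.
  set (a := sstar + Rabs C + 1000).
  assert (Hlarge : forall u, a <= u -> sstar < u /\ 1000 <= u /\ Rabs C <= u)
    by (intros u Hu; pose proof (Rabs_pos C); unfold a in Hu; lra).
  destruct (solution_asymptote_defect_eventually_small gamma delta phi a) as [M HM].
  - apply Hlarge, Rle_refl.
  - intros u Hu; destruct (Hlarge u Hu) as (Hsu & H1000 & HCu).
    apply (mul_pow5_le_of_le_div_pow10 _ C); auto; apply Hbound; lra.
  - intros u Hu; apply Hderiv, Hlarge, Hu.
  - exists 1, (Rmax a M); intros s Hs.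
    destruct (Hlarge s (Rle_trans _ _ _ (Rmax_l a M) Hs)) as (_ & Hs1000 & _).
    rewrite Rabs_sub_asymptote by lra.
    apply Rmult_le_compat_r; [apply Rlt_le, Rinv_0_lt_compat, pow_lt; lra|].
    apply Rlt_le, HM, (Rle_trans _ _ _ (Rmax_r a M) Hs).
Qed.
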